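(* Let $\Gamma$ be a skew-symmetric graph which has the Kahan-Poisson property. Then every induced subgraph $\Gamma'$ of $\Gamma$ (on a non-empty vertex subset) has the Kahan-Poisson property.
   Context: $\mathbb F\in\{\mathbb R,\mathbb C\}$. A skew-symmetric graph is $\Gamma=(S,A)$, $S=\{1,\dots,n\}$, $A=(a_{i,j})$ skew-symmetric over $\mathbb F$; the induced subgraph on $S'\subset S$ is $(S',A|_{S'\times S'})$. Its Poisson bracket on $\mathbb F(x)$ is $\{x_i,x_j\}=a_{i,j}x_ix_j$; its Kahan morphism is $K(x_i)=\tilde x_i$ with $\tilde x_i$ the unique solution of $\tilde x_i-x_i=\tilde x_i\sum_ja_{i,j}x_j+x_i\sum_ja_{i,j}\tilde x_j$; $\Gamma$ has the Kahan-Poisson property if $\{\tilde x_i,\tilde x_j\}=a_{i,j}\tilde x_i\tilde x_j$ for all $i,j$. *)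

From HB Require Import structures.
From mathcomp Require Import all_boot all_algebra.
From mathcomp Require Import mpoly fraction.
From mathcomp Require Import Rstruct complex.

Set Implicit Arguments.
Unset Strict Implicit.
Unset Printing Implicit Defensive.
Import GRing.Theory.
Local Open Scope ring_scope.

(* The base field F in {R, C}: FF true = R (Stdlib reals), FF false = C = R[i]. *)
Definition FF (b : bool) : fieldType :=
  if b then (Rdefinitions.R : fieldType) else (complex Rdefinitions.R : fieldType).

Section Kahan.
Variable F : fieldType.
Variable n : nat.

Definition ratfun := {fraction {mpoly F[n]}}.

Definition xvar (i : 'I_n) : ratfun := tofrac ('X_i : {mpoly F[n]}).

(* Partial derivative d/dx_i on F(x), computed on a representative p/q:
   d(p/q) = (p_i q - p q_i) / q^2 (independent of the chosen representative). *)
Definition rderiv (i : 'I_n) (f : ratfun) : ratfun :=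
  let r := repr f in
  let p := \n_r in let q := \d_r in
  tofrac (mderiv i p * q - p * mderiv i q) / tofrac (q ^+ 2).

(* The log-canonical Poisson bracket {x_i,x_j} = a_ij x_i x_j, extended to F(x)
   as a biderivation: {f,g} = sum_{i,j} a_ij x_i x_j (d_i f)(d_j g). *)
Definition pbracket (A : 'M[F]_n) (f g : ratfun) : ratfun :=
  \sum_(i < n) \sum_(j < n)
     tofrac ((A i j)%:MP) * xvar i * xvar j * rderiv i f * rderiv j g.

(* The linear system for the Kahan map:
   xt_i - x_i = xt_i * sum_j a_ij x_j + x_i * sum_j a_ij xt_j,
   i.e. M xt = x with M_ik = delta_ik (1 - sum_j a_ij x_j) - x_i a_ik. *)
Definition kahan_matrix (A : 'M[F]_n) : 'M[ratfun]_n :=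
  \matrix_(i, k) ((i == k)%:R * (1 - \sum_(j < n) tofrac ((A i j)%:MP) * xvar j)
                  - xvar i * tofrac ((A i k)%:MP)).

Definition xvec : 'cV[ratfun]_n := \col_i xvar i.

Definition kahan (A : 'M[F]_n) : 'cV[ratfun]_n := invmx (kahan_matrix A) *m xvec.

Definition skew_symmetric (A : 'M[F]_n) : Prop := A^T = - A.

Definition kahan_poisson (A : 'M[F]_n) : Prop :=
  forall i j : 'I_n,
    pbracket A (kahan A i 0) (kahan A j 0)
    = tofrac ((A i j)%:MP) * kahan A i 0 * kahan A j 0.

End Kahan.

(* Induced subgraph on S' : vertices of S' relabelled 1..#|S'| in increasing order. *)
Definition induced (F : fieldType) (n : nat) (A : 'M[F]_n) (S' : {set 'I_n})
  : 'M[F]_#|S'| :=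
  \matrix_(i, j) A (enum_val i) (enum_val j).

(** Clearing denominators, the Kahan map is [K(x) = adj(M) x / det M] for the
    polynomial matrix [M] of the Kahan system, and the Kahan-Poisson property
    becomes a family of polynomial identities between the numerators and the
    denominator.  The ring morphism [x_k |-> 0] (for [k] outside [S']) maps
    [M] to the matrix of the induced graph on the surviving rows, kills the
    numerators of the deleted coordinates, and commutes with the bracket
    numerator, since the derivatives in the surviving variables commute with it
    and every term involving a deleted variable carries a factor [x_k].  Hence
    it maps the polynomial identities for [Gamma] to those for [Gamma']. *)
From HB Require Import structures.
From mathcomp Require Import all_boot all_algebra.
From mathcomp Require Import mpoly fraction.
From mathcomp Require Import ring.

Set Implicit Arguments.
Unset Strict Implicit.
Unset Printing Implicit Defensive.
Import GRing.Theory.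
Local Open Scope ring_scope.

Section FractionRepr.
Variable R : idomainType.
Local Open Scope quotient_scope.

Lemma pi_fractionE (x : {ratio R}) :
  \pi_{fraction R} x = tofrac \n_x / tofrac \d_x.
Proof.
have d0 : tofrac \d_x != 0 :> {fraction R} by rewrite tofrac_eq0 denom_ratioP.
apply: (mulIf d0); rewrite mulfVK //.
unlock tofrac; rewrite -[LHS]/(FracField.mul _ _) -FracField.pi_mul.
apply/eqmodP; rewrite /= FracField.equivfE /FracField.mulf /=.
by rewrite !numden_Ratio ?mulf_neq0 ?oner_neq0 ?denom_ratioP //= !mulr1 mulrC.
Qed.

Lemma fraction_reprE (f : {fraction R}) :
  f = tofrac \n_(repr f) / tofrac \d_(repr f).
Proof. by rewrite -pi_fractionE reprK. Qed.

End FractionRepr.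

Lemma mderivXU (R : nzRingType) (n : nat) (i j : 'I_n) :
  ('X_j : {mpoly R[n]})^`M(i) = (i == j)%:R.
Proof.
rewrite mderivX mnm1E eq_sym; case: eqP => [->|_] /=; last by rewrite scale0r.
have -> : (U_(j) - U_(j) = 0)%MM by apply/mnmP => k; rewrite !mnmE subnn.
by rewrite mpolyX0 scale1r.
Qed.

Lemma mpoly_ind_ring (R : nzRingType) (n : nat) (P : {mpoly R[n]} -> Prop) :
  (forall c, P c%:MP) -> (forall i, P 'X_i) ->
  (forall p q, P p -> P q -> P (p + q)) ->
  (forall p q, P p -> P q -> P (p * q)) ->
  forall p, P p.
Proof.
move=> PC PX PD PM; have P1 : P 1 by rewrite -mpolyC1.
have PXm m : P 'X_[m].
  rewrite mpolyXE_id; apply: big_ind => // i _.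
  by elim: (m i) => [|e IH]; rewrite ?expr0 // exprS; apply: PM.
elim/mpolyind => [|c m p _ _ IH]; first by rewrite -mpolyC0.
by apply: PD => //; rewrite -mul_mpolyC; apply: PM.
Qed.

Lemma sum_supp_enum_val (V : nmodType) (T : finType) (S : {set T})
    (G : T -> V) :
  (forall k, k \notin S -> G k = 0) ->
  \sum_k G k = \sum_(k' < #|S|) G (enum_val k').
Proof.
move=> G0; rewrite (bigID (mem S)) /= [X in _ + X]big1 ?addr0 => [|k /G0 //].
exact: big_enum_val.
Qed.

Section PoissonNumerator.
Variables (F : fieldType) (n : nat).
Implicit Types (p q : {mpoly F[n]}) (A : 'M[F]_n).

Lemma rderiv_div i p q : q != 0 ->
  rderiv i (tofrac p / tofrac q) =
  tofrac (p^`M(i) * q - p * q^`M(i)) / tofrac (q ^+ 2).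
Proof.
move=> q0; rewrite /rderiv.
move: (fraction_reprE (tofrac p / tofrac q : ratfun F n)).
set r := repr _; set a := \n_r; set c := \d_r => e.
have c0 : c != 0 := denom_ratioP r.
have tq0 : tofrac q != 0 :> ratfun F n by rewrite tofrac_eq0.
have tc0 : tofrac c != 0 :> ratfun F n by rewrite tofrac_eq0.
have cross : a * q = p * c.
  apply/eqP; rewrite -tofrac_eq !tofracM; apply/eqP.
  by move/eqP: e; rewrite (eqr_div _ _ tq0 tc0) => /eqP <-.
have dcross : a^`M(i) * q + a * q^`M(i) = p^`M(i) * c + p * c^`M(i).
  by rewrite -!mderivM cross.
have key : (a^`M(i) * c - a * c^`M(i)) * q ^+ 2
         = (p^`M(i) * q - p * q^`M(i)) * c ^+ 2.
  apply/eqP; rewrite -subr_eq0; apply/eqP.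
  transitivity (c * q * ((a^`M(i) * q + a * q^`M(i))
                          - (p^`M(i) * c + p * c^`M(i)))
     - (c^`M(i) * q + c * q^`M(i)) * (a * q - p * c)); first by ring.
  by rewrite cross dcross !subrr !mulr0 subrr.
apply/eqP; rewrite eqr_div ?tofrac_eq0 ?expf_neq0 //.
by rewrite -!rmorphM key.
Qed.

Definition pbracket_num A p1 p2 q : {mpoly F[n]} :=
  \sum_(k < n) \sum_(l < n) (A k l)%:MP * 'X_k * 'X_l *
     (p1^`M(k) * q - p1 * q^`M(k)) * (p2^`M(l) * q - p2 * q^`M(l)).

Lemma pbracket_div A p1 p2 q : q != 0 ->
  pbracket A (tofrac p1 / tofrac q) (tofrac p2 / tofrac q) =
  tofrac (pbracket_num A p1 p2 q) / tofrac (q ^+ 4).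
Proof.
move=> q0; have termE (K : fieldType) (a x y u v d : K) : d != 0 ->
    a * x * y * (u / d ^+ 2) * (v / d ^+ 2) = a * x * y * u * v / d ^+ 4.
  by move=> d0; field.
rewrite /pbracket /pbracket_num rmorph_sum mulr_suml; apply: eq_bigr => k _.
rewrite rmorph_sum mulr_suml; apply: eq_bigr => l _.
by rewrite !rderiv_div // /xvar !rmorphXn !rmorphM /= termE ?tofrac_eq0.
Qed.

Lemma kahan_poisson_numE A (p : 'cV[{mpoly F[n]}]_n) q : q != 0 ->
  (forall i, kahan A i 0 = tofrac (p i 0) / tofrac q) ->
  kahan_poisson A <-> forall i j,
    pbracket_num A (p i 0) (p j 0) q = (A i j)%:MP * p i 0 * p j 0 * q ^+ 2.
Proof.
move=> q0 Kp.
have tq4 : tofrac (q ^+ 4) != 0 :> ratfun F n by rewrite tofrac_eq0 expf_neq0.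
have rhsE i j : tofrac (A i j)%:MP * (tofrac (p i 0) / tofrac q) *
                  (tofrac (p j 0) / tofrac q) =
    tofrac ((A i j)%:MP * p i 0 * p j 0 * q ^+ 2) / tofrac (q ^+ 4)
    :> ratfun F n.
  have fieldE (K : fieldType) (a x y d : K) : d != 0 ->
      a * (x / d) * (y / d) = a * x * y * d ^+ 2 / d ^+ 4.
    by move=> d0; field.
  by rewrite !(rmorphM, rmorphXn) /= fieldE ?tofrac_eq0.
rewrite /kahan_poisson; split => KP i j; move: (KP i j);
  rewrite !Kp pbracket_div // rhsE.
- by move/(congr1 (fun z => z * tofrac (q ^+ 4))); rewrite !(divfK tq4) => /eqP;
    rewrite tofrac_eq => /eqP.
- by move=> ->.
Qed.

End PoissonNumerator.

Section KahanCramer.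
Variables (F : fieldType) (n : nat) (A : 'M[F]_n).

Local Notation ev0 := (meval (fun _ : 'I_n => 0 : F)).

Definition kahan_diag (i : 'I_n) : {mpoly F[n]} :=
  1 - \sum_(j < n) (A i j)%:MP * 'X_j.

Definition kahan_mx : 'M[{mpoly F[n]}]_n :=
  \matrix_(i, k) ((i == k)%:R * kahan_diag i - 'X_i * (A i k)%:MP).

Definition xvec_mpoly : 'cV[{mpoly F[n]}]_n := \col_i 'X_i.

Definition kahan_num : 'cV[{mpoly F[n]}]_n := \adj kahan_mx *m xvec_mpoly.

Definition kahan_den : {mpoly F[n]} := \det kahan_mx.

Lemma kahan_matrixE : kahan_matrix A = map_mx (@tofrac _) kahan_mx.
Proof.
apply/matrixP => i k; rewrite !mxE !(rmorphB, rmorphM, rmorph_nat, rmorph1).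
rewrite rmorph_sum; congr (_ * (_ - _) - _).
by apply: eq_bigr => j _; rewrite rmorphM.
Qed.

Lemma xvecE : xvec F n = map_mx (@tofrac _) xvec_mpoly.
Proof. by apply/matrixP => i k; rewrite !mxE. Qed.

Lemma meval0_kahan_diag i : ev0 (kahan_diag i) = 1.
Proof.
rewrite rmorphB rmorph1 rmorph_sum big1 ?subr0 // => j _.
by rewrite rmorphM /= mevalXU mulr0.
Qed.

Lemma meval0_kahan_den : ev0 kahan_den = 1.
Proof.
rewrite -det_map_mx -(det1 F n); congr (\det _); apply/matrixP => i k.
rewrite !mxE rmorphB !rmorphM rmorph_nat /=.
by rewrite meval0_kahan_diag mevalXU mul0r subr0 mulr1.
Qed.

Lemma kahan_den_neq0 : kahan_den != 0.
Proof.
apply: contra_eq_neq _ meval0_kahan_den => ->.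
by rewrite rmorph0 eq_sym oner_neq0.
Qed.

Lemma kahan_num_system : kahan_mx *m kahan_num = kahan_den *: xvec_mpoly.
Proof. by rewrite mulmxA mul_mx_adj mul_scalar_mx. Qed.

Lemma kahan_num_row i :
  \sum_l kahan_mx i l * kahan_num l 0 = kahan_den * 'X_i.
Proof.
move: (congr1 (fun M : 'cV_n => M i 0) kahan_num_system).
by rewrite mxE => ->; rewrite !mxE.
Qed.

Lemma kahan_solution (z : 'cV[{mpoly F[n]}]_n) c : c != 0 ->
  kahan_mx *m z = c *: xvec_mpoly ->
  forall i, kahan A i 0 = tofrac (z i 0) / tofrac c.
Proof.
move=> c0 /(congr1 (map_mx (@tofrac _))); rewrite map_mxM map_mxZ => Mz i.
have tc : tofrac c != 0 :> ratfun F n by rewrite tofrac_eq0.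
have Munit : map_mx (@tofrac _) kahan_mx \in unitmx.
  by rewrite unitmxE det_map_mx unitfE tofrac_eq0 kahan_den_neq0.
rewrite /kahan; have -> : xvec F n =
    (tofrac c)^-1 *: (map_mx (@tofrac _) kahan_mx *m map_mx (@tofrac _) z).
  by rewrite xvecE Mz scalerA (mulVf tc) scale1r.
by rewrite kahan_matrixE -scalemxAr (mulKmx Munit) !mxE mulrC.
Qed.

Lemma kahanE i : kahan A i 0 = tofrac (kahan_num i 0) / tofrac kahan_den.
Proof. exact: kahan_solution kahan_den_neq0 kahan_num_system i. Qed.

End KahanCramer.

Section Restriction.
Variables (F : fieldType) (n : nat) (S' : {set 'I_n}).
Local Notation m := #|S'|.
Implicit Types (p q : {mpoly F[n]}) (k : 'I_n).

Definition restr_var k : {mpoly F[m]} := \sum_(k' | enum_val k' == k) 'X_k'.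

Lemma restr_var_enum (k' : 'I_m) : restr_var (enum_val k') = 'X_k'.
Proof.
by rewrite /restr_var (big_pred1 k') // => j; rewrite (inj_eq enum_val_inj).
Qed.

Lemma restr_var_out k : k \notin S' -> restr_var k = 0.
Proof.
move=> kS; rewrite /restr_var big_pred0 // => j.
by apply: contraNF kS => /eqP <-; apply: enum_valP.
Qed.

Local Notation restr := (mmap (@mpolyC m F) restr_var).

Lemma restrX k : restr 'X_k = restr_var k.
Proof. by rewrite mmapX mmap1U. Qed.

Lemma meval0_restr p :
  meval (fun _ : 'I_m => 0 : F) (restr p) = meval (fun _ : 'I_n => 0 : F) p.
Proof.
elim/mpoly_ind_ring: p => [c|k|p q IHp IHq|p q IHp IHq].
- by rewrite mmapC !mevalC.
- rewrite restrX mevalXU /restr_var rmorph_sum big1 // => j _.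
  by rewrite /= mevalXU.
- by rewrite !rmorphD /= IHp IHq.
- by rewrite !rmorphM /= IHp IHq.
Qed.

Lemma mderiv_restr_var (k' : 'I_m) k :
  (restr_var k)^`M(k') = (enum_val k' == k)%:R.
Proof.
have [kS|kS] := boolP (k \in S'); last first.
  rewrite (restr_var_out kS) mderiv0; case: eqP => // ek.
  by move: kS; rewrite -ek enum_valP.
by rewrite -(enum_rankK_in kS kS) restr_var_enum mderivXU (inj_eq enum_val_inj).
Qed.

Lemma mderiv_restr (k' : 'I_m) p : (restr p)^`M(k') = restr (p^`M(enum_val k')).
Proof.
elim/mpoly_ind_ring: p => [c|k|p q IHp IHq|p q IHp IHq].
- by rewrite mmapC !mderivC rmorph0.
- by rewrite restrX mderiv_restr_var mderivXU rmorph_nat.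
- by rewrite !(rmorphD, mderivD) /= IHp IHq.
- by rewrite !(rmorphD, rmorphM, mderivM) /= IHp IHq.
Qed.

Variable A : 'M[F]_n.
Local Notation A' := (induced A S').

Lemma inducedE (k' l' : 'I_m) : A' k' l' = A (enum_val k') (enum_val l').
Proof. by rewrite mxE. Qed.

Lemma restr_pbracket_num p1 p2 q :
  restr (pbracket_num A p1 p2 q) =
  pbracket_num A' (restr p1) (restr p2) (restr q).
Proof.
rewrite /pbracket_num rmorph_sum (@sum_supp_enum_val _ _ S') => [|k kS];
  last first.
  rewrite rmorph_sum big1 // => l _.
  by rewrite !rmorphM /= !restrX (restr_var_out kS) mulr0 !mul0r.
apply: eq_bigr => k' _.
rewrite rmorph_sum (@sum_supp_enum_val _ _ S') => [|l lS].
  apply: eq_bigr => l' _.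
  by rewrite !(rmorphM, rmorphB) /= mmapC !restrX !restr_var_enum !mderiv_restr
     inducedE.
by rewrite !rmorphM /= !restrX (restr_var_out lS) mulr0 !mul0r.
Qed.

Lemma restr_kahan_diag (k' : 'I_m) :
  restr (kahan_diag A (enum_val k')) = kahan_diag A' k'.
Proof.
rewrite rmorphB rmorph1 rmorph_sum (@sum_supp_enum_val _ _ S') => [|j jS].
  by congr (1 - _); apply: eq_bigr => j' _; rewrite rmorphM /= mmapC restrX
     restr_var_enum inducedE.
by rewrite rmorphM /= restrX (restr_var_out jS) mulr0.
Qed.

Lemma restr_kahan_mx (k' l' : 'I_m) :
  restr (kahan_mx A (enum_val k') (enum_val l')) = kahan_mx A' k' l'.
Proof.
rewrite !mxE rmorphB !rmorphM rmorph_nat /= restr_kahan_diag restrX.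
by rewrite restr_var_enum mmapC (inj_eq enum_val_inj).
Qed.

Lemma restr_kahan_mx_out k l : k \notin S' ->
  restr (kahan_mx A k l) = (k == l)%:R * restr (kahan_diag A k).
Proof.
move=> kS; rewrite mxE rmorphB !rmorphM rmorph_nat /= restrX (restr_var_out kS).
by rewrite mul0r subr0.
Qed.

Lemma restr_kahan_num_out k : k \notin S' -> restr (kahan_num A k 0) = 0.
Proof.
move=> kS; have := congr1 restr (kahan_num_row A k).
rewrite rmorph_sum rmorphM /= restrX (restr_var_out kS) mulr0.
rewrite (bigD1 k) //= big1 => [|l lk]; last first.
  by rewrite rmorphM /= restr_kahan_mx_out // eq_sym (negbTE lk) !mul0r.
rewrite addr0 rmorphM /= restr_kahan_mx_out // eqxx mul1r => /eqP.
rewrite mulf_eq0 => /orP[/eqP diag0|/eqP //].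
move: (oner_neq0 F); rewrite -(meval0_kahan_diag A k) -meval0_restr diag0.
by rewrite rmorph0 eqxx.
Qed.

Definition restr_kahan_num : 'cV[{mpoly F[m]}]_m :=
  \col_k' restr (kahan_num A (enum_val k') 0).

Lemma restr_kahan_numE (k' : 'I_m) :
  restr_kahan_num k' 0 = restr (kahan_num A (enum_val k') 0).
Proof. exact: mxE. Qed.

Lemma restr_kahan_system :
  kahan_mx A' *m restr_kahan_num = restr (kahan_den A) *: xvec_mpoly F m.
Proof.
apply/matrixP => k' z; rewrite ord1 mxE [RHS]mxE [in RHS]mxE.
rewrite -restr_var_enum -restrX -rmorphM -kahan_num_row rmorph_sum.
rewrite (@sum_supp_enum_val _ _ S') => [|l lS]; last first.
  by rewrite rmorphM /= restr_kahan_num_out // mulr0.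
by apply: eq_bigr => l' _; rewrite rmorphM /= restr_kahan_mx restr_kahan_numE.
Qed.

Lemma restr_kahan_den_neq0 : restr (kahan_den A) != 0.
Proof.
apply: contra_eq_neq _ (meval0_kahan_den A) => D0.
by rewrite -meval0_restr D0 rmorph0 eq_sym oner_neq0.
Qed.

Lemma kahan_induced (k' : 'I_m) :
  kahan A' k' 0 = tofrac (restr_kahan_num k' 0) / tofrac (restr (kahan_den A)).
Proof. exact: kahan_solution restr_kahan_den_neq0 restr_kahan_system k'. Qed.

Lemma kahan_poisson_induced : kahan_poisson A -> kahan_poisson A'.
Proof.
move=> /(kahan_poisson_numE (kahan_den_neq0 A) (kahanE A)) KP.
apply/(kahan_poisson_numE restr_kahan_den_neq0 kahan_induced) => k' l'.
rewrite !restr_kahan_numE -restr_pbracket_num KP !(rmorphM, rmorphXn) /= mmapC.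
by rewrite inducedE.
Qed.

End Restriction.

Theorem proposition4p1 (b : bool) (n : nat) (A : 'M[FF b]_n) :
  skew_symmetric A -> kahan_poisson A ->
  forall S' : {set 'I_n}, (0 < #|S'|)%N -> kahan_poisson (induced A S').
Proof.
by move=> _ KP S' _; apply: kahan_poisson_induced.
Qed.
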